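(* Let $N,S\ge 1$ and $d\ge 2$ be integers, and let $\pi$ be a next-token distribution on $[N]^S$ such that for every $t_{1:S}\in[N]^S$ there exists $t_{S+1}\in[N]$ with $\pi(t_{S+1}\mid t_{1:S})=1$ (i.e. all conditional distributions have zero entropy). Then $d_{KL}(\pi,\mathcal{L}(N,S,d))=0$.
   Context: $[N]=\{1,\dots,N\}$. A next-token distribution $\pi$ consists of a prior probability distribution on $[N]^S$ together with, for each $t_{1:S}\in[N]^S$, a conditional probability distribution $\pi_{t_{1:S}}=\pi(\cdot\mid t_{1:S})$ on $[N]$. For $f:[N]^S\to\mathbb{R}^N$, $d_{KL}(\pi,f):=\mathbb{E}_{t_{1:S}\sim\pi}\big[\mathrm{KL}(\pi_{t_{1:S}}\,\|\,\mathrm{Softmax}(f(t_{1:S})))\big]$. The set of sequence encoders is $\mathcal{L}(N,S,d):=\{f_{W,E}: W\in\mathbb{R}^{N\times d},\ E:[N]^S\to\mathbb{R}^d\}$ with $f_{W,E}(t_{1:S})=W E(t_{1:S})$, and $d_{KL}(\pi,\mathcal{L}(N,S,d)):=\inf_{f\in\mathcal{L}(N,S,d)}d_{KL}(\pi,f)$. *)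

From HB Require Import structures.
From mathcomp Require Import all_boot all_order all_algebra.
From mathcomp Require Import all_classical all_reals all_analysis.
Set Implicit Arguments. Unset Strict Implicit. Unset Printing Implicit Defensive.
Import Order.TTheory GRing.Theory Num.Theory.
Local Open Scope ring_scope.

(* Contexts t_{1:S} in [N]^S; tokens [N] = 'I_N (index i stands for i+1). *)
Definition context (N S : nat) := {ffun 'I_S -> 'I_N}.

Definition is_next_token_dist (R : realType) (N S : nat)
    (prior : context N S -> R) (cond : context N S -> 'I_N -> R) : Prop :=
  (forall t, 0 <= prior t) /\ (\sum_t prior t = 1) /\
  (forall t i, 0 <= cond t i) /\ (forall t, \sum_i cond t i = 1).

Definition softmax (R : realType) (N : nat) (v : 'cV[R]_N) (i : 'I_N) : R :=
  expR (v i 0) / \sum_(j < N) expR (v j 0).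

Definition KL (R : realType) (N : nat) (p q : 'I_N -> R) : R :=
  \sum_(i < N) (if p i == 0 then 0 else p i * ln (p i / q i)).

Definition dKL (R : realType) (N S : nat)
    (prior : context N S -> R) (cond : context N S -> 'I_N -> R)
    (f : context N S -> 'cV[R]_N) : R :=
  \sum_t prior t * KL (cond t) (softmax (f t)).

Definition seq_encoders (R : realType) (N S d : nat) : set (context N S -> 'cV[R]_N) :=
  [set f | exists (W : 'M[R]_(N, d)) (E : context N S -> 'cV[R]_d),
             f = fun t => W *m E t].

Definition dKL_class (R : realType) (N S d : nat)
    (prior : context N S -> R) (cond : context N S -> 'I_N -> R) : R :=
  inf [set dKL prior cond f | f in @seq_encoders R N S d].

From HB Require Import structures.
From mathcomp Require Import all_boot all_order all_algebra.
From mathcomp Require Import all_classical all_reals all_analysis.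
From mathcomp Require Import ring.
Set Implicit Arguments. Unset Strict Implicit. Unset Printing Implicit Defensive.
Import Order.TTheory GRing.Theory Num.Theory.
Local Open Scope ring_scope.

(* If every conditional is the point mass at k_t, the divergence at t is
   ln (sum_j exp (v_j - v_(k_t))) for the logits v, which is at most
   sum_(j != k_t) exp (v_j - v_(k_t)).  Two hidden dimensions make all these
   terms small: the token embedding W_j = (2j, -j^2) and the context encoding
   E(t) = s (k_t, 1) give logits v_j = s (2 j k_t - j^2), hence
   v_j - v_(k_t) = - s (j - k_t)^2 <= - s for j != k_t.  So
   d_KL(pi, f_{W,E}) <= N exp (-s) <= N / s, while d_KL is nonnegative. *)

Lemma inf_eq0 (R : realType) (A : set R) :
  lbound A 0 -> (forall e, 0 < e -> exists2 x, A x & x <= e) -> inf A = 0.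
Proof.
move=> A_ge0 A_small; apply/eqP; rewrite eq_le; apply/andP; split.
- apply/ler_addgt0Pr => e e_gt0; rewrite add0r.
  have [x Ax x_le] := A_small e e_gt0.
  by apply: le_trans _ x_le; apply: ge_inf => //; exists 0.
- have [x Ax _] := A_small 1 ltr01.
  by apply: lb_le_inf => //; exists x.
Qed.

Lemma expRN_le_inv (R : realType) (s : R) : 0 < s -> expR (- s) <= s^-1.
Proof.
move=> s_gt0; rewrite expRN lef_pV2 ?posrE ?expR_gt0 //.
by apply: le_trans (expR_ge1Dx s); rewrite lerDr.
Qed.

Lemma sqr_natrB_ge1 (R : archiNumDomainType) (a b : nat) :
  a != b -> 1 <= (a%:R - b%:R : R) ^+ 2.
Proof.
move=> ab; apply: sqr_intr_ge1; first by rewrite rpredB ?natr_int.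
by rewrite subr_eq0 eqr_nat.
Qed.

Section PointMassKL.
Variables (R : realType) (N : nat).
Implicit Types (p q : 'I_N -> R) (v : 'cV[R]_N) (k : 'I_N).

Lemma KL_point_mass p q k :
  (forall i, 0 <= p i) -> \sum_i p i = 1 -> p k = 1 -> KL p q = ln (q k)^-1.
Proof.
move=> p_ge0 p_sum1 pk1.
have p_off0 i : i != k -> p i = 0.
  have off_sum0 : \sum_(i | i != k) p i = 0.
    move: p_sum1; rewrite (bigD1 k) //= pk1.
    by move=> /(canRL (addKr 1)); rewrite addNr.
  by move=> ik; apply: (psumr_eq0P _ off_sum0).
rewrite /KL (bigD1 k) //= pk1 oner_eq0 mul1r div1r big1 ?addr0 // => i ik.
by rewrite p_off0 // eqxx.
Qed.

Lemma softmaxV v k : (softmax v k)^-1 = \sum_j expR (v j 0 - v k 0).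
Proof.
rewrite /softmax invf_div mulr_suml.
by apply: eq_bigr => j _; rewrite expRB.
Qed.

Lemma sum_expR_logitB_ge1 v k : 1 <= \sum_j expR (v j 0 - v k 0).
Proof.
rewrite (bigD1 k) //= subrr expR0 lerDl.
by apply: sumr_ge0 => j _; apply/ltW/expR_gt0.
Qed.

Lemma ln_sum_expR_logitB_le v k :
  ln (\sum_j expR (v j 0 - v k 0)) <= \sum_(j | j != k) expR (v j 0 - v k 0).
Proof.
rewrite (bigD1 k) //= subrr expR0; apply: le_ln1Dx.
apply: (lt_le_trans (_ : -1 < 0)); first by rewrite oppr_lt0.
by apply: sumr_ge0 => j _; apply/ltW/expR_gt0.
Qed.

Lemma sum_predC1_le (F : 'I_N -> R) k c :
  0 <= c -> (forall j, j != k -> F j <= c) -> \sum_(j | j != k) F j <= N%:R * c.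
Proof.
move=> c_ge0 F_le; apply: le_trans (ler_sum _ F_le) _.
rewrite sumr_const -[c *+ _]mulr_natl ler_wpM2r // ler_nat.
by apply: leq_trans (max_card _) _; rewrite card_ord.
Qed.

End PointMassKL.

Section QuadraticEncoder.
Variables (R : realType) (N d : nat).

Definition quad_embedding : 'M[R]_(N, d.+2) := \matrix_(j, l)
  (if l == 0 :> nat then 2 * (j : nat)%:R
   else if l == 1 :> nat then - (j : nat)%:R ^+ 2 else 0).

Definition quad_encoding (s x : R) : 'cV[R]_d.+2 :=
  \col_l (if l == 0 :> nat then s * x else if l == 1 :> nat then s else 0).

Lemma quad_logitB (s : R) (j k : 'I_N) :
  let v := quad_embedding *m quad_encoding s (k : nat)%:R in
  v j 0 - v k 0 = - s * ((j : nat)%:R - (k : nat)%:R) ^+ 2.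
Proof.
have logit (i : 'I_N) : (quad_embedding *m quad_encoding s (k : nat)%:R) i 0
    = 2 * (i : nat)%:R * (s * (k : nat)%:R) - (i : nat)%:R ^+ 2 * s.
  rewrite mxE !big_ord_recl big1 => [|l _]; rewrite !mxE //= ?mul0r //.
  by rewrite addr0 mulNr.
by rewrite /= !logit; ring.
Qed.

Lemma expR_quad_logitB_le (s : R) (j k : 'I_N) : 0 < s -> j != k ->
  let v := quad_embedding *m quad_encoding s (k : nat)%:R in
  expR (v j 0 - v k 0) <= s^-1.
Proof.
move=> s_gt0 jk /=; rewrite quad_logitB.
apply: (@le_trans _ _ (expR (- s))); last exact: expRN_le_inv.
rewrite ler_expR mulNr lerN2 ler_peMr ?(ltW s_gt0) //.
exact: sqr_natrB_ge1.
Qed.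

End QuadraticEncoder.

Section PointMassNextToken.
Variables (R : realType) (N S : nat).
Variables (prior : context N S -> R) (cond : context N S -> 'I_N -> R).
Hypothesis pi_dist : is_next_token_dist prior cond.
Variable k : context N S -> 'I_N.
Hypothesis cond_k : forall t, cond t (k t) = 1.

Lemma KL_cond_softmax t v :
  KL (cond t) (softmax v) = ln (\sum_j expR (v j 0 - v (k t) 0)).
Proof.
have [_ [_ [cond_ge0 cond_sum1]]] := pi_dist.
by rewrite (KL_point_mass _ (cond_ge0 t) (cond_sum1 t) (cond_k t)) softmaxV.
Qed.

Lemma dKL_ge0 f : 0 <= dKL prior cond f.
Proof.
have [prior_ge0 _] := pi_dist.
apply: sumr_ge0 => t _; rewrite mulr_ge0 // KL_cond_softmax.
exact/ln_ge0/sum_expR_logitB_ge1.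
Qed.

Lemma dKL_le f e :
  (forall t, KL (cond t) (softmax (f t)) <= e) -> dKL prior cond f <= e.
Proof.
have [prior_ge0 [prior_sum1 _]] := pi_dist.
move=> KL_le; rewrite -[leRHS]mul1r -prior_sum1 mulr_suml.
by apply: ler_sum => t _; rewrite ler_wpM2l.
Qed.

Lemma dKL_quad_encoder_le d (s : R) : 0 < s ->
  dKL prior cond
    (fun t => quad_embedding R N d *m quad_encoding d s (k t : nat)%:R)
  <= N%:R / s.
Proof.
move=> s_gt0; apply: dKL_le => t; rewrite KL_cond_softmax.
apply: le_trans (ln_sum_expR_logitB_le _ _) _.
apply: sum_predC1_le; first by rewrite invr_ge0 ltW.
by move=> j jk; apply: expR_quad_logitB_le.
Qed.

End PointMassNextToken.

Theorem proposition3 (R : realType) (N S d : nat)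
    (prior : context N S -> R) (cond : context N S -> 'I_N -> R) :
  (1 <= N)%N -> (1 <= S)%N -> (2 <= d)%N ->
  is_next_token_dist prior cond ->
  (forall t : context N S, exists i : 'I_N, cond t i = 1) ->
  @dKL_class R N S d prior cond = 0.
Proof.
case: d => [|[|d]] // N_gt0 _ _ pi_dist /choice[k cond_k].
apply: inf_eq0 => [_ [f _ <-]|e e_gt0]; first exact: dKL_ge0.
pose W := quad_embedding R N d.
pose E t := quad_encoding d (N%:R / e) (k t : nat)%:R.
exists (dKL prior cond (fun t => W *m E t)).
  by exists (fun t => W *m E t) => //; exists W, E.
rewrite -[leRHS](divKf (_ : N%:R != 0)) ?pnatr_eq0 -?lt0n //.
by apply: dKL_quad_encoder_le => //; rewrite divr_gt0 ?ltr0n.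
Qed.
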